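(* Let $C\subseteq\mathbb F_2^n$ be a classical linear code of distance $d$ with dual code $C^\perp$, let $1\le t\le n$, and let $\Gamma_t=\{\gamma\subseteq[n]: |\gamma|=t\}$, so that $\hat\Gamma=\Gamma_{\le t}=\{e\subseteq[n]: 0<|e|\le t\}$. Let $D$ be the real matrix with rows indexed by $s\in C^\perp\setminus\{0\}$, columns indexed by $a\in\Gamma_{\le t}$, and entries $D[s,a]=1$ if $a\subseteq s$ and $0$ otherwise. If $d\ge 2t+1$, then $D$ has full rank (rank $|\Gamma_{\le t}|$).
   Context: $C^\perp=\{a\in\mathbb F_2^n: a\cdot c=0\ \forall c\in C\}$. The distance of $C$ is $d=\min\{\mathrm{wt}(c): c\in C\setminus\{0\}\}$. Vectors in $\mathbb F_2^n$ are identified with their support sets in $[n]$. *)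

From HB Require Import structures.
From mathcomp Require Import all_boot all_order all_algebra.
Set Implicit Arguments. Unset Strict Implicit. Unset Printing Implicit Defensive.
Import GRing.Theory Num.Theory.
Local Open Scope ring_scope.

Definition word n := 'rV['F_2]_n.

Definition supp n (v : word n) : {set 'I_n} := [set i | v 0 i != 0].

Definition wt n (v : word n) : nat := #|supp v|.

Definition dotF2 n (a c : word n) : 'F_2 := (a *m c^T) 0 0.

(* a binary linear code: an F_2-subspace (over F_2 = additive subgroup) *)
Definition is_linear_code n (C : {set word n}) : Prop :=
  0 \in C /\ (forall x y, x \in C -> y \in C -> x + y \in C).

Definition dual_code n (C : {set word n}) : {set word n} :=
  [set a | [forall c in C, dotF2 a c == 0]].

Definition Sperp n (C : {set word n}) : {set word n} :=
  [set s in dual_code C | s != 0].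

Definition Gamma_le n (t : nat) : {set {set 'I_n}} :=
  [set e : {set 'I_n} | (0 < #|e|)%N && (#|e| <= t)%N].

Definition Dmat (R : nzRingType) n (C : {set word n}) (t : nat)
  : 'M[R]_(#|Sperp C|, #|Gamma_le n t|) :=
  \matrix_(i, j) (if (enum_val j : {set 'I_n}) \subset supp (enum_val i : word n)
                  then 1 else 0).

From HB Require Import structures.
From mathcomp Require Import all_boot all_order all_algebra.
From mathcomp Require Import zify.
Set Implicit Arguments. Unset Strict Implicit. Unset Printing Implicit Defensive.
Import GRing.Theory Num.Theory.
Local Open Scope ring_scope.

(* Write chi_b(s) = (-1)^(s . 1_b) for the character of the indicator word of b.
   For s in the dual code, [a \subset supp s] = 2^-|a| prod_(i in a) (1 - chi_{{i}}(s))
   = 2^-|a| sum_(b \subset a) (-1)^|b| chi_b(s).  The characters chi_b with |b| <= t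
   are orthogonal on the dual code: 1_b + 1_b' has weight at most 2t < d, so it lies
   in C, the dual of the dual, only when b = b'.  Pairing a relation
   sum_a x_a [a \subset supp s] = 0 between the columns of D with chi_b thus gives
   sum_(a \supseteq b) x_a 2^-|a| = 0 for every column b, a unitriangular system
   whose only solution is x = 0. *)

Lemma sum_subset_prod (R : comNzRingType) (I : finType) (A : {set I}) (g : I -> R) :
  \sum_(B : {set I} | B \subset A) \prod_(i in B) g i = \prod_(i in A) (1 + g i).
Proof.
pose F i := if i \in A then g i else 0.
rewrite big_mkcond [RHS]big_mkcond /=.
rewrite [RHS](eq_bigr (fun i => F i + 1)) => [|i _]; last first.
  by rewrite /F; case: (i \in A); rewrite ?add0r // addrC.
rewrite bigA_distr; apply: eq_bigr => B _; rewrite -big_mkcond /=.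
case: ifP => [BA | /subsetPn[i iB iA]].
  by apply: eq_bigr => i iB; rewrite /F (subsetP BA).
by rewrite (bigD1 i) //= /F (negbTE iA) mul0r.
Qed.

Lemma superset_sums_eq0 (V : nmodType) (I T : finType) (a : I -> {set T}) (y : I -> V) :
  injective a -> (forall j, \sum_(k | a j \subset a k) y k = 0) -> forall j, y j = 0.
Proof.
move=> a_inj y_sum j; have [m lt_m] := ubnP (#|T| - #|a j|).
elim: m j lt_m => // m IH j lt_m.
rewrite -(y_sum j) (bigD1 j) //= big1 ?addr0 // => k /andP[jk kj]; apply: IH.
have jk_proper : a j \proper a k by rewrite properEneq jk (inj_eq a_inj) eq_sym kj.
have := proper_card jk_proper; have := max_card (a k); lia.
Qed.

Lemma F2P (x : 'F_2) : x = 0 \/ x = 1.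
Proof. by case: x => [[|[|m]] lt_m2]; [left | right | ]; try exact: val_inj. Qed.

Lemma F2_addxx (x : 'F_2) : x + x = 0.
Proof. by case: (F2P x) => ->; apply: val_inj. Qed.

Section Dual.
Variable n : nat.
Implicit Types (C : {set word n}) (v w s : word n).

Lemma dotF2C v w : dotF2 v w = dotF2 w v.
Proof. by rewrite /dotF2 !mxE; apply: eq_bigr => i _; rewrite !mxE mulrC. Qed.

Lemma dotF2Dl s s' w : dotF2 (s + s') w = dotF2 s w + dotF2 s' w.
Proof. by rewrite /dotF2 mulmxDl mxE. Qed.

Lemma dotF2Dr s w w' : dotF2 s (w + w') = dotF2 s w + dotF2 s w'.
Proof. by rewrite dotF2C dotF2Dl !(dotF2C _ s). Qed.

Lemma dotF20r s : dotF2 s 0 = 0.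
Proof. by rewrite /dotF2 trmx0 mulmx0 mxE. Qed.

Lemma word_addvv v : v + v = 0.
Proof. by apply/rowP => i; rewrite !mxE F2_addxx. Qed.

Lemma dual_code0 C : 0 \in dual_code C.
Proof. by rewrite inE; apply/forall_inP => c _; rewrite dotF2C dotF20r. Qed.

Lemma dual_codeD C s s' :
  s \in dual_code C -> s' \in dual_code C -> s + s' \in dual_code C.
Proof.
rewrite !inE => /forall_inP sC /forall_inP s'C; apply/forall_inP => c cC.
by rewrite dotF2Dl (eqP (sC c cC)) (eqP (s'C c cC)) addr0.
Qed.

Definition code_mx C : 'M['F_2]_(#|C|, n) := \matrix_(i, j) (enum_val i : word n) 0 j.

Lemma mem_code_rowspace C v : is_linear_code C -> (v <= code_mx C)%MS -> v \in C.
Proof.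
move=> [C0 CD] /submxP[D ->]; rewrite mulmx_sum_row.
apply: (big_ind (fun v => v \in C)) => // i _.
have -> : row i (code_mx C) = enum_val i by apply/rowP => j; rewrite !mxE.
by case: (F2P (D 0 i)) => ->; rewrite ?scale0r ?scale1r ?enum_valP.
Qed.

Lemma dual_code_ker C s : 0 \in C -> (s \in dual_code C) = (s <= kermx (code_mx C)^T)%MS.
Proof.
move=> C0; have dot_row i : dotF2 s (enum_val i) = (s *m (code_mx C)^T) 0 i.
  by rewrite /dotF2 !mxE; apply: eq_bigr => j _; rewrite !mxE.
rewrite sub_kermx inE; apply/forall_inP/eqP => [sC | sA c cC].
  by apply/rowP => i; rewrite -dot_row mxE (eqP (sC _ (enum_valP i))).
by rewrite -(enum_rankK_in C0 cC) dot_row sA mxE.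
Qed.

Lemma dual_dual_code_sub C : is_linear_code C -> dual_code (dual_code C) \subset C.
Proof.
move=> linC; have C0 := linC.1; apply/subsetP => w.
rewrite inE => /forall_inP w_perp.
pose A := code_mx C; pose K := kermx A^T.
(* The rows of K lie in the dual code, so w is in kermx K^T; that kernel contains A
   and has the same rank as A. *)
have wK : w *m K^T = 0.
  apply/rowP => i; rewrite !mxE -[RHS](eqP (w_perp (row i K) _)).
    by rewrite /dotF2 mxE; apply: eq_bigr => j _; rewrite !mxE.
  by rewrite dual_code_ker ?row_sub.
have AK : (A <= kermx K^T)%MS.
  by rewrite sub_kermx -{1}(trmxK A) -trmx_mul mulmx_ker trmx0.
have KA : (kermx K^T <= A)%MS.
  have [_ <-] := mxrank_leqif_sup AK.
  by rewrite !mxrank_ker !mxrank_tr mxrank_ker mxrank_tr subKn ?rank_leq_col.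
by apply: mem_code_rowspace => //; apply: submx_trans KA; rewrite sub_kermx wK.
Qed.

Lemma supp0 : supp (0 : word n) = set0.
Proof. by apply/setP => i; rewrite !inE mxE eqxx. Qed.

End Dual.

Section Characters.
Variables (R : numFieldType) (n : nat).
Implicit Types (C : {set word n}) (v w s : word n) (A B b : {set 'I_n}).

Definition sgn2 (x : 'F_2) : R := if x == 0 then 1 else -1.

Lemma sgn2D : {morph sgn2 : x y / x + y >-> x * y}.
Proof.
move=> x y; case: (F2P x) => ->; case: (F2P y) => ->;
  by rewrite /sgn2 /= ?mulrNN ?mulr1 ?mul1r.
Qed.

Definition chi w s : R := sgn2 (dotF2 s w).

Lemma chiDl w w' s : chi (w + w') s = chi w s * chi w' s.
Proof. by rewrite /chi dotF2Dr sgn2D. Qed.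

Lemma chiDr w s s' : chi w (s + s') = chi w s * chi w s'.
Proof. by rewrite /chi dotF2Dl sgn2D. Qed.

Lemma dual_codeDr C s s0 :
  s0 \in dual_code C -> (s + s0 \in dual_code C) = (s \in dual_code C).
Proof.
move=> s0C; apply/idP/idP => [ss0C | sC]; last exact: dual_codeD.
by rewrite -(addr0 s) -(word_addvv s0) addrA dual_codeD.
Qed.

Lemma sum_chi_dual C w : is_linear_code C ->
  \sum_(s in dual_code C) chi w s = if w \in C then #|dual_code C|%:R else 0.
Proof.
move=> linC; case: ifP => wC.
  rewrite (eq_bigr (fun _ => 1)) ?sumr_const // => s; rewrite inE => /forall_inP sC.
  by rewrite /chi (eqP (sC w wC)) /sgn2 eqxx.
have [s0 s0C s0w] : exists2 s0, s0 \in dual_code C & dotF2 s0 w != 0.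
  apply/exists_inP; apply: contraFT wC; rewrite negb_exists_in => /forall_inP w_perp.
  apply: (subsetP (dual_dual_code_sub linC)); rewrite inE; apply/forall_inP => s sC.
  by rewrite dotF2C; apply: negbNE (w_perp s sC).
(* Translation by s0 permutes the dual code and flips the sign of chi w. *)
set S := \sum_(s in _) _; have : S = - S.
  rewrite {1}/S (reindex_inj (addIr s0)) (eq_bigl _ _ (fun s => dual_codeDr s s0C)) -sumrN.
  by apply: eq_bigr => s _; rewrite chiDr /chi /sgn2 (negbTE s0w) mulrN1.
by move/eqP; rewrite -addr_eq0 -mulr2n mulrn_eq0 => /eqP.
Qed.

Definition word_of_set A : word n := \row_i (i \in A)%:R.

Lemma chi_word_of_set A s : chi (word_of_set A) s = \prod_(i in A) sgn2 (s 0 i).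
Proof.
have dot_A : dotF2 s (word_of_set A) = \sum_(i in A) s 0 i.
  rewrite /dotF2 mxE [RHS]big_mkcond; apply: eq_bigr => i _; rewrite !mxE.
  by case: (i \in A); rewrite ?mulr1 ?mulr0.
by rewrite /chi dot_A (big_morph _ sgn2D (_ : sgn2 0 = 1)) // /sgn2 eqxx.
Qed.

Lemma word_of_setD_eq0 A B : (word_of_set A + word_of_set B == 0) = (A == B).
Proof.
apply/eqP/eqP => [AB0 | ->]; last exact: word_addvv.
apply/setP => i; have /rowP/(_ i) := AB0; rewrite !mxE.
by case: (i \in A); case: (i \in B).
Qed.

Lemma wt_word_of_setD A B : (wt (word_of_set A + word_of_set B)%R <= #|A| + #|B|)%N.
Proof.
apply: leq_trans (leq_card_setU A B); apply: subset_leq_card.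
by apply/subsetP => i; rewrite !inE !mxE; case: (i \in A); case: (i \in B).
Qed.

Lemma sum_subset_sign_chi A s :
  \sum_(B : {set 'I_n} | B \subset A) (-1) ^+ #|B| * chi (word_of_set B) s
    = (A \subset supp s)%:R * 2 ^+ #|A|.
Proof.
under eq_bigr => B _ do rewrite chi_word_of_set -prodrN.
rewrite sum_subset_prod; case: (boolP (A \subset supp s)) => [As | /subsetPn[i iA]].
  rewrite mul1r -prodr_const; apply: eq_bigr => i /(subsetP As).
  by rewrite inE /sgn2 => /negbTE ->; rewrite opprK.
by rewrite inE negbK mul0r (bigD1 i) //= /sgn2 => ->; rewrite subrr mul0r.
Qed.

Section MinimumDistance.
Variables (C : {set word n}) (t : nat).
Hypothesis linC : is_linear_code C.
Hypothesis wt_C : forall c, c \in C -> c != 0 -> (2 * t + 1 <= wt c)%N.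

Lemma sum_chi_word_of_set A B : (#|A| <= t)%N -> (#|B| <= t)%N ->
  \sum_(s in dual_code C) chi (word_of_set A) s * chi (word_of_set B) s
    = (A == B)%:R * #|dual_code C|%:R.
Proof.
move=> At Bt; under eq_bigr do rewrite -chiDl.
rewrite sum_chi_dual //.
have -> : (word_of_set A + word_of_set B \in C) = (A == B).
  rewrite -word_of_setD_eq0; apply/idP/idP => [wC | /eqP->]; last exact: linC.1.
  case: eqP => // /eqP w_neq0; have := wt_C wC w_neq0.
  have := wt_word_of_setD A B; lia.
by case: (A == B); rewrite ?mul1r ?mul0r.
Qed.

Lemma sum_chi_subset_supp A b : (#|A| <= t)%N -> (#|b| <= t)%N ->
  \sum_(s in dual_code C) chi (word_of_set b) s * (A \subset supp s)%:R
    = (b \subset A)%:R * (-1) ^+ #|b| * #|dual_code C|%:R / 2 ^+ #|A|.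
Proof.
move=> At bt; have two_neq0 : 2 ^+ #|A| != 0 :> R by rewrite expf_neq0 ?pnatr_eq0.
under eq_bigr do rewrite -[_%:R](mulfK two_neq0) -sum_subset_sign_chi mulrA.
rewrite -mulr_suml; congr (_ / _).
under eq_bigr do rewrite mulr_sumr.
rewrite exchange_big /=.
under eq_bigr => B _ do (under eq_bigr do rewrite mulrCA; rewrite -mulr_sumr).
under eq_bigr => B BA do rewrite sum_chi_word_of_set ?(leq_trans (subset_leq_card BA)) //.
case: (boolP (b \subset A)) => bA.
  rewrite (bigD1 b) //= big1 => [|B /andP[_ /negbTE nBb]]; last first.
    by rewrite eq_sym nBb mul0r mulr0.
  by rewrite eqxx !mul1r addr0.
rewrite big1 ?mul0r // => B BA.
by rewrite (_ : b == B = false) ?mul0r ?mulr0 //; apply: contraNF bA => /eqP->.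
Qed.

Lemma dual_subset_indicators_free (I : finType) (a : I -> {set 'I_n}) (x : I -> R) :
  injective a -> (forall j, #|a j| <= t)%N ->
  (forall s, s \in dual_code C -> \sum_j x j * (a j \subset supp s)%:R = 0) ->
  forall j, x j = 0.
Proof.
move=> a_inj a_t x_perp.
have two_neq0 j : 2 ^+ #|a j| != 0 :> R by rewrite expf_neq0 ?pnatr_eq0.
pose y j := x j / 2 ^+ #|a j|.
suff y0 : forall j, y j = 0 by move=> j; rewrite -[x j](divfK (two_neq0 j)) [_ / _]y0 mul0r.
apply: (superset_sums_eq0 a_inj) => j.
have N_neq0 : (-1) ^+ #|a j| * #|dual_code C|%:R != 0 :> R.
  rewrite mulf_neq0 ?signr_eq0 // pnatr_eq0 -lt0n.
  by apply/card_gt0P; exists 0; exact: dual_code0.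
apply: (mulfI N_neq0); rewrite mulr0 mulr_sumr.
transitivity (\sum_(s in dual_code C)
    chi (word_of_set (a j)) s * \sum_k x k * (a k \subset supp s)%:R); last first.
  by rewrite big1 // => s sC; rewrite x_perp ?mulr0.
apply/esym; under eq_bigr do rewrite mulr_sumr.
rewrite exchange_big [RHS]big_mkcond /=; apply: eq_bigr => k _.
under eq_bigr do rewrite mulrCA.
rewrite -mulr_sumr sum_chi_subset_supp //.
by case: ifP => _; rewrite ?mul0r ?mulr0 // mul1r mulrCA.
Qed.

End MinimumDistance.

End Characters.

Theorem corollary4 (R : realFieldType) (n t : nat) (C : {set word n}) :
  is_linear_code C ->
  (1 <= t <= n)%N ->
  (forall c, c \in C -> c != 0 -> (2 * t + 1 <= wt c)%N) ->
  \rank (Dmat R C t) = #|Gamma_le n t|.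
Proof.
move=> linC _ wt_C.
rewrite -mxrank_tr; apply/eqP; change (row_free (Dmat R C t)^T).
rewrite -kermx_eq0; apply/eqP/row_matrixP => i.
set D := Dmat R C t; set r := row i (kermx D^T); rewrite row0.
have rD : r *m D^T = 0 by apply/sub_kermxP; rewrite row_sub.
have Gamma_t (j : 'I_#|Gamma_le n t|) : (0 < #|enum_val j|)%N && (#|enum_val j| <= t)%N.
  by have := enum_valP j; rewrite inE.
apply/rowP => j; rewrite [RHS]mxE.
apply: (dual_subset_indicators_free linC wt_C (@enum_val_inj _ _) (x := r 0)) => [k | s sC].
  by case/andP: (Gamma_t k).
have [-> | s_neq0] := eqVneq s 0.
  rewrite big1 // => k _; rewrite supp0 subset0 -cards_eq0.
  by case/andP: (Gamma_t k) => /lt0n_neq0/negbTE ->; rewrite mulr0.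
have sS : s \in Sperp C by rewrite inE sC s_neq0.
transitivity ((r *m D^T) 0 (enum_rank_in sS s)); last by rewrite rD mxE.
by rewrite mxE; apply: eq_bigr => k _; rewrite !mxE enum_rankK_in //; case: (_ \subset _).
Qed.
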